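(* Let $A,B\in\mathfrak{J}_n$ be nonempty. If $A,B$ satisfy the zero-measure condition, then $xA\,\widetilde\oplus\,(1-x)B$ is Jordan measurable for every $x\in\mathbb{R}$. Otherwise it is Jordan measurable for every $x\in\mathbb{R}$ with $x\ne\frac12$.
   Context: $\mu$ is $n$-dimensional Lebesgue measure; a set $E$ is Jordan measurable iff it is bounded and $\mu(\partial E)=0$. $\operatorname{ci}(A)$ is the closure of the interior of $A$. $\mathfrak{J}_n$ is the family of bounded sets $A\subset\mathbb{R}^n$ with $A=\operatorname{ci}(A)$ and $\mu(\partial A)=0$. For nonempty bounded $A$, $d_S(p,A)=d(p,\partial A)$ if $p\in A$ and $d_S(p,A)=-d(p,\partial A)$ if $p\notin A$, with $d(q,E)=\min_{e\in E}\|q-e\|$. For nonempty $A,B\in\mathfrak{J}_n$, $x\in\mathbb{R}$: $f_{A,B,x}(p)=x\,d_S(p,A)+(1-x)\,d_S(p,B)$, the distance average is $xA\,\widetilde\oplus\,(1-x)B=\{p: f_{A,B,x}(p)\ge0\}$, and $\Omega_{A,B,x}=\{p: f_{A,B,x}(p)=0\}$. The sets $A,B$ satisfy the zero-measure condition if $\mu(\Omega_{A,B,1/2})=0$. *)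

From mathcomp Require Import all_boot.
From Stdlib Require Import Reals ClassicalEpsilon.

Set Implicit Arguments.
Unset Strict Implicit.

Local Open Scope R_scope.

Definition pt (n : nat) := 'I_n -> R.
Definition rset (n : nat) := pt n -> Prop.

Definition enorm n (p : pt n) : R :=
  sqrt (\big[Rplus/0]_(i < n) (p i * p i)).
Definition edist n (p q : pt n) : R := enorm (fun i => p i - q i).

Definition interior n (A : rset n) : rset n :=
  fun p => exists eps, 0 < eps /\ forall q, edist p q < eps -> A q.
Definition closure n (A : rset n) : rset n :=
  fun p => forall eps, 0 < eps -> exists q, A q /\ edist p q < eps.
Definition boundary n (A : rset n) : rset n :=
  fun p => closure A p /\ closure (fun q => ~ A q) p.
Definition ci n (A : rset n) : rset n := closure (interior A).

Definition bounded n (E : rset n) : Prop :=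
  exists M, forall p, E p -> enorm p <= M.
Definition nonempty n (E : rset n) : Prop := exists p, E p.

(* Lebesgue null sets, written out from the definition of Lebesgue outer
   measure: for every eps > 0, E is covered by countably many closed boxes
   [a k, b k] of total volume <= eps. *)
Definition box_vol n (a b : pt n) : R := \big[Rmult/1]_(i < n) (b i - a i).
Definition lebesgue_null n (E : rset n) : Prop :=
  forall eps, 0 < eps ->
    exists a b : nat -> pt n,
      (forall k i, a k i <= b k i) /\
      (forall p, E p -> exists k, forall i, a k i <= p i <= b k i) /\
      (forall N, sum_f_R0 (fun k => box_vol (a k) (b k)) N <= eps).

Definition jordan_measurable n (E : rset n) : Prop :=
  bounded E /\ lebesgue_null (boundary E).

Definition in_Jn n (A : rset n) : Prop :=
  bounded A /\ (forall p, A p <-> ci A p) /\ lebesgue_null (boundary A).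

(* d(q,E) = min_{e in E} ||q - e|| (chosen by Hilbert epsilon; it is the
   minimum whenever the minimum exists, e.g. E closed nonempty). *)
Definition is_min_dist n (q : pt n) (E : rset n) (r : R) : Prop :=
  (exists e, E e /\ edist q e = r) /\ (forall e, E e -> r <= edist q e).
Definition dist_set n (q : pt n) (E : rset n) : R :=
  epsilon (inhabits 0) (is_min_dist q E).

Definition signed_dist n (p : pt n) (A : rset n) : R :=
  epsilon (inhabits 0) (fun r =>
    (A p -> r = dist_set p (boundary A)) /\
    (~ A p -> r = - dist_set p (boundary A))).

Definition fABx n (A B : rset n) (x : R) (p : pt n) : R :=
  x * signed_dist p A + (1 - x) * signed_dist p B.

Definition dist_avg n (A B : rset n) (x : R) : rset n :=
  fun p => 0 <= fABx A B x p.

Definition Omega n (A B : rset n) (x : R) : rset n :=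
  fun p => fABx A B x p = 0.

Definition zero_measure_condition n (A B : rset n) : Prop :=
  lebesgue_null (Omega A B (1/2)).

(* Write f = f_{A,B,x}.  The distance average D = {f >= 0} is bounded because
   f(p) <= -|p| + C, and, f being Lipschitz, its boundary lies in the level set
   Omega = {f = 0}.  Hence D is Jordan measurable as soon as Omega is null, which
   is the zero-measure condition for x = 1/2.  For x <> 1/2 we prove that Omega
   is always null: by the symmetry Omega_{A,B,x} = Omega_{B,A,1-x} we may take
   x > 1/2, and then Omega is covered by the null set bd A together with the
   slices Z_k = Omega /\ {d(., bd A) >= 1/(k+1)}.  Each slice is porous (near a
   point of Z_k, moving towards its nearest boundary point of A changes the
   A-term of f faster than the B-term can compensate), and bounded porous sets
   are null by a cube-subdivision argument. *)

From HB Require Import structures.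
From Pilot Require Import Defs.
From mathcomp Require Import all_boot zify.
From Stdlib Require Import Reals Lra Lia ClassicalEpsilon Classical FunctionalExtensionality.
From Stdlib Require List.

Set Implicit Arguments.
Unset Strict Implicit.

Local Open Scope R_scope.

(* [closure] and [bounded] also exist in MathComp; we mean the ones of Defs. *)
Notation closure := Defs.closure.
Notation bounded := Defs.bounded.

Lemma RplusA : associative Rplus. Proof. by move=> a b c; ring. Qed.
Lemma RmultA : associative Rmult. Proof. by move=> a b c; ring. Qed.
HB.instance Definition _ :=
  Monoid.isComLaw.Build R 0 Rplus RplusA Rplus_comm Rplus_0_l.
HB.instance Definition _ :=
  Monoid.isComLaw.Build R 1 Rmult RmultA Rmult_comm Rmult_1_l.
HB.instance Definition _ := Monoid.isMulLaw.Build R 0 Rmult Rmult_0_l Rmult_0_r.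
HB.instance Definition _ :=
  Monoid.isAddLaw.Build R Rmult Rplus Rmult_plus_distr_r Rmult_plus_distr_l.

Lemma rsum_ge0 (I : Type) (r : seq I) (P : pred I) (F : I -> R) :
  (forall i, 0 <= F i) -> 0 <= \big[Rplus/0]_(i <- r | P i) F i.
Proof.
by move=> F0; apply: (big_ind (fun x => 0 <= x)) => [|x y|i _]; [lra|lra|exact: F0].
Qed.

Lemma rsum_le (I : Type) (r : seq I) (P : pred I) (F G : I -> R) :
  (forall i, F i <= G i) ->
  \big[Rplus/0]_(i <- r | P i) F i <= \big[Rplus/0]_(i <- r | P i) G i.
Proof.
by move=> FG; apply: (big_ind2 (fun x y => x <= y)) => [|x1 x2 y1 y2|i _]; [lra|lra|exact: FG].
Qed.

Lemma rsum_const n c : \big[Rplus/0]_(i < n) c = INR n * c.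
Proof.
rewrite big_const_ord; elim: n => [|k IH]; first by rewrite /=; ring.
by rewrite S_INR /= IH; ring.
Qed.

Lemma rsum_seq_le_const (I : Type) (r : seq I) (F : I -> R) V :
  (forall i, List.In i r -> F i <= V) -> \big[Rplus/0]_(i <- r) F i <= INR (size r) * V.
Proof.
elim: r => [|i r IH] FV; first by rewrite big_nil /=; lra.
rewrite big_cons [size _]/= S_INR.
by have := FV i (or_introl erefl); have := IH (fun j jr => FV j (or_intror jr)); lra.
Qed.

Lemma rprod_const n c : \big[Rmult/1]_(i < n) c = c ^ n.
Proof. by rewrite big_const_ord; elim: n => [|k IH] //=; rewrite IH. Qed.

Lemma INR_expn (m k : nat) : INR (expn m k) = INR m ^ k.
Proof. by elim: k => [|k IH] //; rewrite expnS -multE mult_INR IH /=; ring. Qed.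

Lemma rsum_term_le n (F : 'I_n -> R) j :
  (forall i, 0 <= F i) -> F j <= \big[Rplus/0]_(i < n) F i.
Proof.
move=> F0; rewrite (bigD1 j) //= -[X in X <= _]Rplus_0_r.
by apply: Rplus_le_compat_l; exact: rsum_ge0.
Qed.

Lemma Rabs_le_bounds a b : Rabs a <= b -> - b <= a <= b.
Proof. by rewrite /Rabs; case: Rcase_abs; lra. Qed.

Lemma enorm_ext n (u v : pt n) : (forall i, u i = v i) -> enorm u = enorm v.
Proof. by move=> uv; rewrite /enorm; congr sqrt; apply: eq_bigr => i _; rewrite uv. Qed.

Lemma enorm_ge0 n (p : pt n) : 0 <= enorm p.
Proof. exact: sqrt_pos. Qed.

Lemma enorm_sq n (p : pt n) : enorm p * enorm p = \big[Rplus/0]_(i < n) (p i * p i).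
Proof. by rewrite /enorm sqrt_sqrt //; apply: rsum_ge0 => i; nra. Qed.

Lemma coord_le_enorm n (p : pt n) i : Rabs (p i) <= enorm p.
Proof.
apply: Rsqr_incr_0_var; last exact: enorm_ge0.
rewrite /Rsqr enorm_sq -Rabs_mult Rabs_right; last nra.
by apply: (@rsum_term_le n (fun k => p k * p k) i) => j; nra.
Qed.

Lemma enorm_le_l1 n (p : pt n) : enorm p <= \big[Rplus/0]_(i < n) Rabs (p i).
Proof.
have l1_ge0 m (u : pt m) : 0 <= \big[Rplus/0]_(i < m) Rabs (u i).
  by apply: rsum_ge0 => i; apply: Rabs_pos.
apply: Rsqr_incr_0_var; last exact: l1_ge0.
rewrite /Rsqr enorm_sq; elim: n p => [|k IH] p; first by rewrite !big_ord0; lra.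
rewrite !big_ord_recr /=.
set sq := \big[Rplus/0]_(i < k) _; set l1 := \big[Rplus/0]_(i < k) _.
have sq_le : sq <= l1 * l1 by exact: (IH (fun i => p (widen_ord (leqnSn k) i))).
have l1_0 : 0 <= l1 by exact: (l1_ge0 _ (fun i => p (widen_ord (leqnSn k) i))).
have sq_abs : p ord_max * p ord_max = Rabs (p ord_max) * Rabs (p ord_max).
  by rewrite -Rabs_mult Rabs_right; nra.
have := Rabs_pos (p ord_max); nra.
Qed.

Lemma enorm_le_coord_bound n (p : pt n) s :
  (forall i, Rabs (p i) <= s) -> enorm p <= INR n * s.
Proof.
by move=> ps; apply: Rle_trans (enorm_le_l1 p) _; rewrite -rsum_const; exact: rsum_le.
Qed.

Lemma enorm_scale n (u : pt n) c : enorm (fun i => c * u i) = Rabs c * enorm u.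
Proof.
rewrite /enorm (eq_bigr (fun i => (c * c) * (u i * u i))); last by move=> i _; ring.
rewrite -big_distrr /= sqrt_mult; [|nra|by apply: rsum_ge0 => i; nra].
by rewrite -sqrt_Rsqr_abs.
Qed.

(* Cauchy-Schwarz: expand 0 <= sum_i (|v| u_i - |u| v_i)^2. *)
Lemma cauchy_schwarz n (u v : pt n) :
  \big[Rplus/0]_(i < n) (u i * v i) <= enorm u * enorm v.
Proof.
set a := enorm u; set b := enorm v; set S := \big[Rplus/0]_(i < n) (u i * v i).
have a0 : 0 <= a by apply: enorm_ge0.
have b0 : 0 <= b by apply: enorm_ge0.
have expand : \big[Rplus/0]_(i < n) ((b * u i - a * v i) * (b * u i - a * v i)) =
    b * b * \big[Rplus/0]_(i < n) (u i * u i) +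
    a * a * \big[Rplus/0]_(i < n) (v i * v i) + (- 2 * a * b) * S.
  by rewrite !big_distrr /= -!big_split /=; apply: eq_bigr => i _; ring.
have : 0 <= \big[Rplus/0]_(i < n) ((b * u i - a * v i) * (b * u i - a * v i)).
  by apply: rsum_ge0 => i; apply: Rle_0_sqr.
rewrite expand -(enorm_sq u) -(enorm_sq v) -/a -/b => key.
have null_norm (w w' : pt n) : enorm w = 0 ->
    \big[Rplus/0]_(i < n) (w i * w' i) = 0.
  move=> w0; rewrite (eq_bigr (fun _ => 0)) ?rsum_const; first ring.
  move=> i _; have := coord_le_enorm w i; rewrite w0 => wi.
  have -> : w i = 0 by move: wi; rewrite /Rabs; case: Rcase_abs; lra.
  ring.
have [a_eq0|a_ne0] := Req_dec a 0; first by have := null_norm u v a_eq0; rewrite -/S; nra.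
have [b_eq0|b_ne0] := Req_dec b 0.
  have := null_norm v u b_eq0.
  by rewrite (eq_bigr (fun i => u i * v i)) -/S => [|i _]; [nra|ring].
have ab : 0 < a * b by apply: Rmult_lt_0_compat; lra.
suff : S - a * b <= 0 by lra.
by apply: (Rmult_le_reg_l (2 * (a * b))); nra.
Qed.

Lemma enorm_triangle n (u v : pt n) : enorm (fun i => u i + v i) <= enorm u + enorm v.
Proof.
apply: Rsqr_incr_0_var; last by have := enorm_ge0 u; have := enorm_ge0 v; lra.
rewrite /Rsqr enorm_sq.
have -> : \big[Rplus/0]_(i < n) ((u i + v i) * (u i + v i)) =
    \big[Rplus/0]_(i < n) (u i * u i) + \big[Rplus/0]_(i < n) (v i * v i) +
    2 * \big[Rplus/0]_(i < n) (u i * v i).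
  by rewrite big_distrr /= -!big_split /=; apply: eq_bigr => i _; ring.
by rewrite -!enorm_sq; have := cauchy_schwarz u v; nra.
Qed.

Lemma edist_ge0 n (p q : pt n) : 0 <= edist p q.
Proof. exact: enorm_ge0. Qed.

Lemma edist_sym n (p q : pt n) : edist p q = edist q p.
Proof.
rewrite /edist (enorm_ext (v := fun i => -1 * (q i - p i))); last by move=> i; ring.
by rewrite enorm_scale Rabs_Ropp Rabs_R1; ring.
Qed.

Lemma edist_tri n (p q r : pt n) : edist p r <= edist p q + edist q r.
Proof.
rewrite /edist (enorm_ext (v := fun i => (p i - q i) + (q i - r i))); last by move=> i; ring.
exact: enorm_triangle.
Qed.

Lemma edist_refl n (p : pt n) : edist p p = 0.
Proof.
rewrite /edist (enorm_ext (v := fun i => 0 * p i)); last by move=> i; ring.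
by rewrite enorm_scale Rabs_R0; ring.
Qed.

Lemma coord_le_edist n (p q : pt n) i : Rabs (p i - q i) <= edist p q.
Proof. exact: (coord_le_enorm (fun i => p i - q i)). Qed.

Lemma edist_le_coord_bound n (p q : pt n) s :
  (forall i, Rabs (p i - q i) <= s) -> edist p q <= INR n * s.
Proof. exact: (enorm_le_coord_bound (p := fun i => p i - q i)). Qed.

Lemma enorm_edist0 n (p : pt n) : enorm p = edist p (fun _ => 0).
Proof. by rewrite /edist; apply: enorm_ext => i; ring. Qed.

Lemma enorm_le_edist n (p q : pt n) : enorm p <= edist p q + enorm q.
Proof. by rewrite !enorm_edist0; exact: edist_tri. Qed.

Lemma edist_le_enorm n (p q : pt n) : edist p q <= enorm p + enorm q.
Proof. by rewrite !enorm_edist0 (edist_sym q); exact: edist_tri. Qed.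

Definition seg n (p q : pt n) (t : R) : pt n := fun i => p i + t * (q i - p i).

Lemma seg_dist n (p q : pt n) s t :
  edist (seg p q s) (seg p q t) = Rabs (s - t) * edist p q.
Proof.
by rewrite /edist Rabs_minus_sym -enorm_scale; apply: enorm_ext => i; rewrite /seg; ring.
Qed.

Lemma seg0 n (p q : pt n) : seg p q 0 = p.
Proof. by apply: functional_extensionality => i; rewrite /seg; ring. Qed.

Lemma seg1 n (p q : pt n) : seg p q 1 = q.
Proof. by apply: functional_extensionality => i; rewrite /seg; ring. Qed.

Lemma seg_dist0 n (p q : pt n) t : edist p (seg p q t) = Rabs t * edist p q.
Proof. by rewrite -{1}(seg0 p q) seg_dist Rabs_minus_sym Rminus_0_r. Qed.

Lemma seg_dist1 n (p q : pt n) t : edist (seg p q t) q = Rabs (1 - t) * edist p q.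
Proof. by rewrite -{2}(seg1 p q) seg_dist Rabs_minus_sym. Qed.

Lemma closure_mono n (A B : rset n) p :
  (forall q, A q -> B q) -> closure A p -> closure B p.
Proof. by move=> AB Ap eps e0; have [q [Aq pq]] := Ap eps e0; exists q; split => //; exact: AB. Qed.

Lemma closure_idem n (A : rset n) p : closure (closure A) p -> closure A p.
Proof.
move=> Cp eps e0; have [q [Cq pq]] := Cp (eps / 2) ltac:(lra).
have [r [Ar qr]] := Cq (eps / 2) ltac:(lra).
by exists r; split => //; have := edist_tri p q r; lra.
Qed.

Lemma boundary_closed n (A : rset n) p : closure (boundary A) p -> boundary A p.
Proof. by move=> Cp; split; apply: closure_idem; apply: closure_mono Cp => q []. Qed.

Lemma Jn_closed n (A : rset n) p : in_Jn A -> closure A p -> A p.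
Proof.
move=> [_ [A_ci _]] Cp; apply/A_ci; apply: closure_idem.
by apply: closure_mono Cp => q Aq; apply/A_ci.
Qed.

Lemma Jn_boundary n (A : rset n) p : in_Jn A -> boundary A p -> A p.
Proof. by move=> AJ [Cp _]; exact: Jn_closed AJ Cp. Qed.

(* Crossing lemma: the segment from a point of A to a point outside A meets
   the boundary of A (at the supremum of the parameters staying in A). *)
Lemma crossing n (A : rset n) p q : A p -> ~ A q ->
  exists t, 0 <= t <= 1 /\ boundary A (seg p q t).
Proof.
move=> Ap Aq.
set E := fun t => 0 <= t <= 1 /\ A (seg p q t).
have E_bound : bound E by exists 1 => t [[]].
have E0 : E 0 by split; [lra | rewrite seg0].
have [s [s_ub s_lub]] := completeness E E_bound (ex_intro _ 0 E0).
have s0 : 0 <= s by apply: s_ub.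
have s1 : s <= 1 by apply: s_lub => t [[]].
exists s; split; first lra.
set D := edist p q; have D0 : 0 <= D by apply: edist_ge0.
have small_step d eps : 0 < eps -> 0 <= d <= eps / (D + 1) -> d * D < eps.
  move=> e0 [d0 dle]; have : d * D <= eps / (D + 1) * D by apply: Rmult_le_compat_r.
  suff : eps / (D + 1) * D < eps by lra.
  by apply: (Rmult_lt_reg_r (D + 1)); [lra | field_simplify; lra].
have step_pos eps : 0 < eps -> 0 < eps / (D + 1) by move=> e0; apply: Rdiv_lt_0_compat; lra.
split=> eps e0.
-
  have [t [Et ts]] : exists t, E t /\ s - eps / (D + 1) < t.
    apply: NNPP => none.
    suff : s <= s - eps / (D + 1) by have := step_pos _ e0; lra.
    apply: s_lub => t Et; apply: Rnot_lt_le => st; apply: none; by exists t.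
  have t_s : t <= s by apply: s_ub.
  exists (seg p q t); split; first by case: Et.
  by rewrite seg_dist -/D Rabs_right; [apply: small_step; lra | lra].
-
  have [s_eq1|s_ne1] := Req_dec s 1.
    by exists q; split => //; rewrite s_eq1 seg1 edist_refl; lra.
  set d := Rmin (eps / (D + 1)) ((1 - s) / 2).
  have d0 : 0 < d by apply: Rmin_pos; [exact: step_pos | lra].
  have d_le1 : d <= (1 - s) / 2 by apply: Rmin_r.
  have d_le2 : d <= eps / (D + 1) by apply: Rmin_l.
  exists (seg p q (s + d)); split.
    move=> A_sd; suff : s + d <= s by lra.
    by apply: s_ub; split => //; lra.
  rewrite seg_dist -/D (_ : s - (s + d) = - d); last ring.
  by rewrite Rabs_Ropp Rabs_right; [apply: small_step; lra | lra].
Qed.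

Definition cube n (a : pt n) (g : R) : rset n :=
  fun p => forall i, a i <= p i <= a i + g.

Definition subcorner n (a : pt n) (g : R) (q : nat) (idx : {ffun 'I_n -> 'I_q}) : pt n :=
  fun i => a i + INR (idx i) * (g / INR q).
Arguments subcorner {n} a g q idx.

Lemma split_interval (q : nat) a s x : (0 < q)%nat -> 0 <= s ->
  a <= x <= a + INR q * s -> exists k : 'I_q, a + INR k * s <= x <= a + INR k * s + s.
Proof.
elim: q => [//|q IH] _ s0 ax.
have [q0|q_pos] := posnP q; first by subst q; exists ord0; rewrite /= in ax *; lra.
have [x_low|x_high] := Rle_lt_dec x (a + INR q * s).
  have [k hk] := IH q_pos s0 ltac:(lra).
  by exists (widen_ord (leqnSn q) k).
by exists ord_max; rewrite /=; rewrite S_INR in ax; lra.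
Qed.

Lemma cube_split n (q : nat) (a : pt n) g p : (0 < q)%nat -> 0 <= g -> cube a g p ->
  exists idx : {ffun 'I_n -> 'I_q}, cube (subcorner a g q idx) (g / INR q) p.
Proof.
move=> q0 g0 ap.
have qR : 0 < INR q by apply: lt_0_INR; apply/ltP.
set P := fun i (k : 'I_q) =>
  a i + INR k * (g / INR q) <= p i <= a i + INR k * (g / INR q) + g / INR q.
have coord i : exists k, P i k.
  apply: split_interval => //; first exact: Rle_mult_inv_pos.
  by rewrite (_ : INR q * (g / INR q) = g); [exact: ap | field; lra].
exists [ffun i => epsilon (inhabits (Ordinal q0)) (P i)] => i.
by rewrite /subcorner ffunE; exact: epsilon_spec (coord i).
Qed.

Lemma cube_coord_close n (a : pt n) s p y : cube a s p -> cube a s y ->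
  forall i, Rabs (p i - y i) <= s.
Proof. by move=> ap ay i; have := ap i; have := ay i; rewrite /Rabs; case: Rcase_abs; lra. Qed.

Lemma bounded_in_cube n (S : rset n) M :
  (forall p, S p -> enorm p <= M) ->
  forall p, S p -> cube (fun _ => - (Rabs M + 1)) (2 * (Rabs M + 1)) p.
Proof.
move=> SM p Sp i; have := SM p Sp; have := coord_le_enorm p i; have := Rle_abs M.
by rewrite /Rabs; case: Rcase_abs; case: Rcase_abs; lra.
Qed.

Lemma fin_common_threshold (T : finType) (Q : T -> R -> Prop) :
  (forall t, exists e, 0 < e /\ forall e', 0 < e' <= e -> Q t e') ->
  exists e, 0 < e /\ forall t, Q t e.
Proof.
move=> QT.
suff [e [e0 He]] : exists e, 0 < e /\
    forall t, t \in enum T -> forall e', 0 < e' <= e -> Q t e'.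
  by exists e; split => // t; apply: He; [rewrite mem_enum | lra].
elim: (enum T) => [|t s [e [e0 IH]]]; first by exists 1; split => //; lra.
have [e1 [e1_0 H1]] := QT t.
exists (Rmin e e1); split; first exact: Rmin_pos.
move=> u; rewrite inE => /orP [/eqP -> | us] e' e'_le.
  by apply: H1; have := Rmin_r e e1; lra.
by apply: IH => //; have := Rmin_l e e1; lra.
Qed.

Lemma geometric_small th K eps : 0 <= th < 1 -> 0 < eps -> exists j, K * th ^ j < eps.
Proof.
move=> th01 e0; have [K0|K_pos] := Rle_lt_dec K 0; first by exists 0%nat; simpl; lra.
have [N HN] := pow_lt_1_zero th ltac:(rewrite Rabs_right; lra)
  (eps / K) ltac:(apply: Rdiv_lt_0_compat; lra).
exists N; have := HN N (le_n N).
rewrite Rabs_right; last by apply: Rle_ge; apply: pow_le; lra.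
move=> small; apply: (Rmult_lt_reg_r (/ K)); first exact: Rinv_0_lt_compat.
by rewrite (_ : K * th ^ N * / K = th ^ N); [exact: small | field; lra].
Qed.

(* Let
   m = inf_{e in F} d(q, e).  Bisecting a cube containing F, we keep at each step
   a half-size subcube still containing points of F whose distance to q is
   arbitrarily close to m; the nested cubes shrink to a point c of F with
   d(q, c) <= m. *)
Section NearestPoint.
Variables (n : nat) (F : rset n) (q : pt n) (M : R).
Hypothesis F_closed : forall p, closure F p -> F p.
Hypothesis F_ne : exists e, F e.
Hypothesis F_bounded : forall e, F e -> enorm e <= M.

Let negdist := fun r => exists e, F e /\ r = - edist q e.
Let negdist_bound : bound negdist.
Proof. by exists 0 => r [e [_ ->]]; have := edist_ge0 q e; lra. Qed.
Let negdist_ne : exists r, negdist r.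
Proof. by have [e Fe] := F_ne; exists (- edist q e), e. Qed.
Let sup_spec := completeness negdist negdist_bound negdist_ne.
Let m := - proj1_sig sup_spec.

Let m_le e : F e -> m <= edist q e.
Proof.
move=> Fe; have := proj1 (proj2_sig sup_spec) _ (ex_intro _ e (conj Fe erefl)).
by rewrite /m; lra.
Qed.

Let m_approx eps : 0 < eps -> exists e, F e /\ edist q e < m + eps.
Proof.
move=> e0; apply: NNPP => none.
suff : proj1_sig sup_spec <= proj1_sig sup_spec - eps by lra.
apply: (proj2 (proj2_sig sup_spec)) => _ [e [Fe ->]].
by apply: Rnot_lt_le => close; apply: none; exists e; split => //; rewrite /m; lra.
Qed.

Definition good_cube (a : pt n) (s : R) :=
  forall eps, 0 < eps -> exists e, F e /\ cube a s e /\ edist q e < m + eps.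

(* One of the 2^n halves of a good cube is good: otherwise each half has a
   precision it misses, and their minimum is missed by the whole cube. *)
Let good_half a s : 0 <= s -> good_cube a s ->
  exists idx : {ffun 'I_n -> 'I_2}, good_cube (subcorner a s 2 idx) (s / 2).
Proof.
move=> s0 good; apply: NNPP => none.
have bad idx : exists e, 0 < e /\ forall e', 0 < e' <= e -> forall p, F p ->
    cube (subcorner a s 2 idx) (s / INR 2) p -> m + e' <= edist q p.
  apply: NNPP => not_bad; apply: none; exists idx => eps e0.
  apply: NNPP => miss; apply: not_bad; exists eps; split => // e' e'_le p Fp cp.
  by apply: Rnot_lt_le => close; apply: miss; exists p; split => //; split => //; lra.
have [e [e0 He]] := fin_common_threshold bad.
have [p [Fp [cp close]]] := good e e0.
have [idx p_idx] := cube_split (q := 2) erefl s0 cp.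
by have := He idx p Fp p_idx; lra.
Qed.

Let corner0 : pt n := fun _ => - (Rabs M + 1).
Let side0 := 2 * (Rabs M + 1).
Let side k := side0 * (/ 2) ^ k.

Let side_ge0 k : 0 <= side k.
Proof. by apply: Rmult_le_pos; [rewrite /side0; have := Rabs_pos M; lra | apply: pow_le; lra]. Qed.

Let good0 : good_cube corner0 side0.
Proof.
move=> eps e0; have [e [Fe close]] := m_approx e0.
by exists e; split => //; split => //; exact: (bounded_in_cube F_bounded).
Qed.

(* The corner of a good half of cube a s (any half if a s is not good). *)
Definition next_corner (a : pt n) (s : R) : pt n :=
  epsilon (inhabits a) (fun a' => exists idx : {ffun 'I_n -> 'I_2},
    a' = subcorner a s 2 idx /\ (good_cube a s -> good_cube a' (s / 2))).

Fixpoint corner (k : nat) : pt n :=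
  if k is k'.+1 then next_corner (corner k') (side k') else corner0.

Let next_corner_spec a s : 0 <= s -> exists idx : {ffun 'I_n -> 'I_2},
  next_corner a s = subcorner a s 2 idx /\
  (good_cube a s -> good_cube (next_corner a s) (s / 2)).
Proof.
move=> s0; rewrite /next_corner.
apply: (epsilon_spec (inhabits a) (fun a' => exists idx : {ffun 'I_n -> 'I_2},
  a' = subcorner a s 2 idx /\ (good_cube a s -> good_cube a' (s / 2)))).
have [good|not_good] := classic (good_cube a s).
  by have [idx gidx] := good_half s0 good; exists (subcorner a s 2 idx), idx.
by exists (subcorner a s 2 [ffun _ => ord0]), [ffun _ => ord0].
Qed.

Let corner_good k : good_cube (corner k) (side k).
Proof.
elim: k => [|k IH]; first by rewrite /side /= Rmult_1_r; exact: good0.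
have [idx [_ Hgood]] := next_corner_spec (corner k) (side_ge0 k).
rewrite /= (_ : side k.+1 = side k / 2); first exact: Hgood.
by rewrite /side /=; field.
Qed.

Let corner_step k i : corner k i <= corner k.+1 i <= corner k i + side k.+1.
Proof.
have [idx [E _]] := next_corner_spec (corner k) (side_ge0 k).
rewrite [corner k.+1]/= E /subcorner.
have idx1 : INR (idx i) <= 1.
  by have := ltn_ord (idx i); case: (nat_of_ord (idx i)) => [|[|//]] _ /=; lra.
have := pos_INR (idx i); have := side_ge0 k.+1.
by rewrite (_ : side k.+1 = side k / INR 2); [nra | rewrite /side /=; field].
Qed.

Let corner_nested k j i : (k <= j)%nat ->
  corner k i <= corner j i /\ corner j i + side j <= corner k i + side k.
Proof.
move=> /subnK <-; elim: (j - k)%nat => [|d [IH1 IH2]]; first by rewrite add0n; lra.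
rewrite addSn; have := corner_step (d + k) i.
rewrite (_ : side (d + k).+1 = side (d + k) / 2); last by rewrite /side /=; field.
by have := side_ge0 (d + k); lra.
Qed.

Let limit_coord i : {l : R | Un_cv (fun k => corner k i) l}.
Proof.
apply: growing_cv; first by move=> k; exact: (proj1 (corner_step k i)).
exists (corner 0 i + side0) => _ [k ->].
by have := corner_nested i (leq0n k); have := side_ge0 k; rewrite /side /= Rmult_1_r; lra.
Qed.

Let c : pt n := fun i => proj1_sig (limit_coord i).

Let c_in_cubes k : cube (corner k) (side k) c.
Proof.
move=> i; rewrite /c; case: (limit_coord i) => l cv /=; split.
  by apply: (@growing_ineq (fun j => corner j i)) => // j; exact: (proj1 (corner_step j i)).
apply: Rnot_lt_le => above.
have [N HN] := cv (l - (corner k i + side k)) ltac:(lra).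
have := HN (maxn N k) ltac:(apply/leP; exact: leq_maxl).
have := corner_nested i (leq_maxr N k); have := side_ge0 (maxn N k).
by rewrite /R_dist /Rabs; case: Rcase_abs; lra.
Qed.

Let near_c k e : cube (corner k) (side k) e -> edist c e <= INR n * side k.
Proof. by move=> ce; apply: edist_le_coord_bound; exact: cube_coord_close (c_in_cubes k) ce. Qed.

Lemma nearest_point : exists c, F c /\ forall e, F e -> edist q c <= edist q e.
Proof.
have c_near eps : 0 < eps -> exists e, F e /\ edist c e < eps /\ edist q e < m + eps.
  move=> e0; have [k small] := geometric_small (INR n * side0) (ltac:(lra) : 0 <= / 2 < 1) e0.
  have [e [Fe [ce close]]] := corner_good k e0.
  exists e; split => //; split => //; apply: Rle_lt_trans small.
  by rewrite Rmult_assoc; exact: near_c.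
have Fc : F c.
  by apply: F_closed => eps e0; have [e [Fe [ce _]]] := c_near eps e0; exists e.
exists c; split => // e Fe; suff : edist q c <= m by have := m_le Fe; lra.
apply: Rnot_lt_le => far; set d := (edist q c - m) / 3.
have [e' [_ [ce' close]]] := c_near d ltac:(rewrite /d; lra).
by have := edist_tri q e' c; rewrite (edist_sym e' c) /d in ce' close *; lra.
Qed.
End NearestPoint.

Definition lipschitz n (g : pt n -> R) (L : R) :=
  forall p q, Rabs (g p - g q) <= L * edist p q.

Lemma lipschitz_local_sign n (g : pt n -> R) L p q : 0 <= L -> lipschitz g L ->
  edist p q < Rabs (g p) / (L + 1) -> Rabs (g p - g q) < Rabs (g p).
Proof.
move=> L0 gL pq; have := edist_ge0 p q; have := gL p q => gpq d0.
have : L * edist p q <= L * (Rabs (g p) / (L + 1)) by apply: Rmult_le_compat_l; lra.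
suff : L * (Rabs (g p) / (L + 1)) < Rabs (g p) by lra.
have gp0 : 0 < Rabs (g p).
  have : 0 < / (L + 1) by apply: Rinv_0_lt_compat; lra.
  by move: pq; rewrite /Rdiv; have := Rabs_pos (g p); nra.
by apply: (Rmult_lt_reg_r (L + 1)); [lra | field_simplify; lra].
Qed.

Lemma lipschitz_superlevel_boundary n (g : pt n -> R) L p : 0 <= L -> lipschitz g L ->
  boundary (fun q => 0 <= g q) p -> g p = 0.
Proof.
move=> L0 gL [in_cl out_cl]; apply: NNPP => gp0.
have r0 : 0 < Rabs (g p) / (L + 1).
  by apply: Rdiv_lt_0_compat; [apply: Rabs_pos_lt | lra].
have [q [gq pq]] := in_cl _ r0; have [q' [gq' pq']] := out_cl _ r0.
have := lipschitz_local_sign L0 gL pq; have := lipschitz_local_sign L0 gL pq'.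
by rewrite /Rabs; repeat case: Rcase_abs; lra.
Qed.

Section SignedDistance.
Variables (n : nat) (A : rset n).
Hypothesis n_pos : (0 < n)%coq_nat.
Hypothesis AJ : in_Jn A.
Hypothesis A_ne : nonempty A.

Local Notation d q := (dist_set q (boundary A)).

(* A bounded nonempty set in positive dimension has a boundary point: cross
   from a point of A to a point beyond the bound. *)
Lemma boundary_ne : exists b, boundary A b.
Proof.
have [M AM] := proj1 AJ; have [p Ap] := A_ne.
have M0 : 0 <= M by have := AM p Ap; have := enorm_ge0 p; lra.
set q : pt n := fun _ => M + 1.
have q_out : ~ A q.
  move=> Aq; have := AM q Aq.
  have := coord_le_enorm q (Ordinal (introT ltP n_pos)); rewrite /q /= Rabs_right; lra.
by have [t [_ bt]] := crossing Ap q_out; exists (seg p q t).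
Qed.

Lemma dist_spec q : is_min_dist q (boundary A) (d q).
Proof.
rewrite /dist_set; apply: epsilon_spec.
have [M AM] := proj1 AJ.
have [c [bc c_min]] := nearest_point q (@boundary_closed n A) boundary_ne
  (fun e be => AM e (Jn_boundary AJ be)).
by exists (edist q c); split; first exists c.
Qed.

Lemma dist_le q b : boundary A b -> d q <= edist q b.
Proof. exact: (proj2 (dist_spec q)). Qed.

Lemma dist_attained q : exists b, boundary A b /\ edist q b = d q.
Proof. exact: (proj1 (dist_spec q)). Qed.

Lemma dist_ge0 q : 0 <= d q.
Proof. by have [b [_ <-]] := dist_attained q; exact: edist_ge0. Qed.

Lemma dist_lip p q : d q <= d p + edist p q.
Proof.
have [b [bb pb]] := dist_attained p.
by have := dist_le q bb; have := edist_tri q p b; rewrite (edist_sym q p); lra.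
Qed.

Lemma signed_dist_in p : A p -> signed_dist p A = d p.
Proof.
move=> Ap; rewrite /signed_dist.
have [|sd_in _] := epsilon_spec (inhabits 0)
  (fun r => (A p -> r = d p) /\ (~ A p -> r = - d p)); last exact: sd_in.
by exists (d p); split.
Qed.

Lemma signed_dist_out p : ~ A p -> signed_dist p A = - d p.
Proof.
move=> Ap; rewrite /signed_dist.
have [|_ sd_out] := epsilon_spec (inhabits 0)
  (fun r => (A p -> r = d p) /\ (~ A p -> r = - d p)); last exact: sd_out.
by exists (- d p); split.
Qed.

Lemma signed_dist_bounds p : - d p <= signed_dist p A <= d p.
Proof.
have := dist_ge0 p.
by case: (classic (A p)) => Ap; [rewrite (signed_dist_in Ap) | rewrite (signed_dist_out Ap)]; lra.
Qed.

(* The signed distance is 1-Lipschitz; across the boundary, both distances are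
   bounded by the portions of the segment [p, q] cut by a boundary point. *)
Lemma signed_dist_lip1 p q : signed_dist q A <= signed_dist p A + edist p q.
Proof.
have := dist_ge0 p; have := dist_ge0 q; have := edist_ge0 p q.
case: (classic (A p)) => Ap; case: (classic (A q)) => Aq.
- by rewrite (signed_dist_in Ap) (signed_dist_in Aq); have := dist_lip p q; lra.
- by rewrite (signed_dist_in Ap) (signed_dist_out Aq); lra.
- rewrite (signed_dist_out Ap) (signed_dist_in Aq).
  have [t [t01 bt]] := crossing Aq Ap.
  have := dist_le q bt; have := dist_le p bt.
  rewrite seg_dist0 Rabs_right; last lra.
  rewrite edist_sym seg_dist1 Rabs_right; last lra.
  by rewrite (edist_sym p q); nra.
- by rewrite (signed_dist_out Ap) (signed_dist_out Aq); have := dist_lip q p; rewrite edist_sym; lra.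
Qed.

Lemma signed_dist_lip : lipschitz (fun p => signed_dist p A) 1.
Proof.
move=> p q; have := signed_dist_lip1 p q; have := signed_dist_lip1 q p.
by rewrite Rmult_1_l (edist_sym q p) /Rabs; case: Rcase_abs; lra.
Qed.

Lemma signed_dist_far M p : (forall p, A p -> enorm p <= M) ->
  Rabs (signed_dist p A + enorm p) <= 3 * M.
Proof.
move=> AM; have [b [bb pb]] := dist_attained p.
have bM := AM b (Jn_boundary AJ bb).
have := enorm_le_edist p b; have := edist_le_enorm p b.
rewrite pb; have := dist_ge0 p; have := enorm_ge0 b.
case: (classic (A p)) => Ap.
- have := AM p Ap; rewrite (signed_dist_in Ap) /Rabs; case: Rcase_abs; lra.
- rewrite (signed_dist_out Ap) /Rabs; case: Rcase_abs; lra.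
Qed.

End SignedDistance.

Section DistanceAverage.
Variables (n : nat) (A B : rset n) (x : R).
Hypothesis n_pos : (0 < n)%coq_nat.
Hypotheses (AJ : in_Jn A) (A_ne : nonempty A) (BJ : in_Jn B) (B_ne : nonempty B).

Local Notation f := (fABx A B x).

Lemma fABx_lip : lipschitz f (Rabs x + Rabs (1 - x)).
Proof.
move=> p q; rewrite /fABx.
have := signed_dist_lip n_pos AJ A_ne p q; have := signed_dist_lip n_pos BJ B_ne p q.
rewrite (_ : x * signed_dist p A + (1 - x) * signed_dist p B -
    (x * signed_dist q A + (1 - x) * signed_dist q B) =
    x * (signed_dist p A - signed_dist q A) +
    (1 - x) * (signed_dist p B - signed_dist q B)); last ring.
move=> dB dA; apply: Rle_trans (Rabs_triang _ _) _; rewrite !Rabs_mult.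
have := Rabs_pos x; have := Rabs_pos (1 - x); nra.
Qed.

(* f(p) <= - |p| + C, since each signed distance is - |p| up to a constant. *)
Lemma fABx_superlevel_bounded : exists C, forall p, 0 <= f p -> enorm p <= C.
Proof.
have [MA AM] := proj1 AJ; have [MB BM] := proj1 BJ.
exists (3 * (MA + MB) * (Rabs x + Rabs (1 - x))) => p fp.
have eA := signed_dist_far n_pos AJ A_ne p AM; have eB := signed_dist_far n_pos BJ B_ne p BM.
have MA0 : 0 <= MA by have [a Aa] := A_ne; have := AM a Aa; have := enorm_ge0 a; lra.
have MB0 : 0 <= MB by have [b Bb] := B_ne; have := BM b Bb; have := enorm_ge0 b; lra.
have f_split : f p = - enorm p + x * (signed_dist p A + enorm p) +
    (1 - x) * (signed_dist p B + enorm p) by rewrite /fABx; ring.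
have tA := Rle_abs (x * (signed_dist p A + enorm p)).
have tB := Rle_abs ((1 - x) * (signed_dist p B + enorm p)).
rewrite Rabs_mult in tA; rewrite Rabs_mult in tB.
have := Rabs_pos x; have := Rabs_pos (1 - x).
have := Rabs_pos (signed_dist p A + enorm p); have := Rabs_pos (signed_dist p B + enorm p).
nra.
Qed.

Lemma dist_avg_bounded : bounded (dist_avg A B x).
Proof. exact: fABx_superlevel_bounded. Qed.

Lemma Omega_bounded : exists C, forall p, Omega A B x p -> enorm p <= C.
Proof.
have [C fC] := fABx_superlevel_bounded.
by exists C => p fp; apply: fC; rewrite fp; lra.
Qed.

Lemma dist_avg_boundary p : boundary (dist_avg A B x) p -> Omega A B x p.
Proof.
apply: (lipschitz_superlevel_boundary _ fABx_lip).
by have := Rabs_pos x; have := Rabs_pos (1 - x); lra.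
Qed.

End DistanceAverage.

Definition porous n (S : rset n) (rho alpha : R) :=
  forall p, S p -> forall r, 0 < r <= rho ->
    exists y, edist p y <= r /\ forall q, edist y q < alpha * r -> ~ S q.

Section PorousSlices.
Variables (n : nat) (A B : rset n) (x : R).
Hypothesis n_pos : (0 < n)%coq_nat.
Hypotheses (AJ : in_Jn A) (A_ne : nonempty A) (BJ : in_Jn B) (B_ne : nonempty B).
Hypothesis x_gt : 1 / 2 < x.

Local Notation f := (fABx A B x).
Local Notation d q := (dist_set q (boundary A)).

Definition slice (k : nat) : rset n := fun p => f p = 0 /\ / (INR k + 1) <= d p.

(* Omega is covered by bd A and the slices: a point of Omega off bd A is at
   positive distance from the closed set bd A. *)
Lemma Omega_cover p : Omega A B x p -> boundary A p \/ exists k, slice k p.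
Proof.
move=> fp; have [a [ba pa]] := dist_attained n_pos AJ A_ne p.
have [d0|d_ne0] := Req_dec (d p) 0.
  by left; apply: boundary_closed => eps e0; exists a; split => //; lra.
right; have d_pos : 0 < d p by have := dist_ge0 n_pos AJ A_ne p; lra.
have [k k_big] := INR_unbounded (/ d p); exists k; split => //.
rewrite -(Rinv_inv (d p)); apply: Rinv_le_contravar; first exact: Rinv_0_lt_compat.
lra.
Qed.

(* The porosity constant: the A-term of f dominates the B-term for moves of
   length (1 + alpha) r that bring the point (1 - alpha) r closer to bd A. *)
Definition slice_alpha := (x - Rabs (1 - x)) / (2 * (x + Rabs (1 - x))).

Lemma slice_alpha_gain :
  x * (1 - slice_alpha) - Rabs (1 - x) * (1 + slice_alpha) = (x - Rabs (1 - x)) / 2.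
Proof.
rewrite /slice_alpha; have := Rabs_pos (1 - x).
by move=> ?; field; lra.
Qed.

Lemma slice_alpha_range : 0 < slice_alpha <= 1.
Proof.
have gap : 0 < x - Rabs (1 - x) by rewrite /Rabs; case: Rcase_abs; lra.
have := Rabs_pos (1 - x) => abs0; rewrite /slice_alpha; split.
  by apply: Rdiv_lt_0_compat; lra.
apply: (Rmult_le_reg_r (2 * (x + Rabs (1 - x)))); first lra.
by field_simplify; lra.
Qed.

Lemma slice_escape p q r : f p = 0 -> 0 < r ->
  edist p q < (1 + slice_alpha) * r -> d q < d p - (1 - slice_alpha) * r -> f q <> 0.
Proof.
move=> fp r0 pq closer fq.
have x0 : 0 < x by lra.
have gap : 0 < (x * (1 - slice_alpha) - Rabs (1 - x) * (1 + slice_alpha)) * r.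
  by rewrite slice_alpha_gain; apply: Rmult_lt_0_compat => //; rewrite /Rabs; case: Rcase_abs; lra.
have [B_lo B_hi] : - (Rabs (1 - x) * ((1 + slice_alpha) * r)) <=
    (1 - x) * (signed_dist q B - signed_dist p B) <= Rabs (1 - x) * ((1 + slice_alpha) * r).
  apply: Rabs_le_bounds; rewrite Rabs_mult (Rabs_minus_sym (signed_dist q B)).
  apply: Rmult_le_compat_l; first exact: Rabs_pos.
  by have := signed_dist_lip n_pos BJ B_ne p q; lra.
(* the A-term changes by more than x (1 - alpha) r, with a definite sign *)
have f_diff : f q - f p = x * (signed_dist q A - signed_dist p A) +
    (1 - x) * (signed_dist q B - signed_dist p B) by rewrite /fABx; ring.
have [sdq_lo sdq_hi] := signed_dist_bounds n_pos AJ A_ne q.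
case: (classic (A p)) => Ap.
- rewrite (signed_dist_in Ap) in f_diff.
  have : x * (signed_dist q A - d p) < x * (- ((1 - slice_alpha) * r)).
    by apply: Rmult_lt_compat_l => //; lra.
  lra.
- rewrite (signed_dist_out Ap) in f_diff.
  have : x * ((1 - slice_alpha) * r) < x * (signed_dist q A - - d p).
    by apply: Rmult_lt_compat_l => //; lra.
  lra.
Qed.

(* The hole: walk from p a length r towards a nearest boundary point a; the
   ball of radius alpha r around that point lies closer to a. *)
Lemma slice_porous k : porous (slice k) (/ (2 * (INR k + 1))) slice_alpha.
Proof.
move=> p [fp dp] r [r0 r_le].
have k0 : 0 < INR k + 1 by have := pos_INR k; lra.
have r2 : 2 * r <= d p.
  by move: r_le; rewrite (_ : / (2 * (INR k + 1)) = / 2 * / (INR k + 1)); [lra | field; lra].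
have [a [ba pa]] := dist_attained n_pos AJ A_ne p.
have d_pos : 0 < d p by lra.
set t := r / d p.
have t01 : 0 <= t <= 1.
  rewrite /t; split; first by apply: Rle_mult_inv_pos; lra.
  by apply: (Rmult_le_reg_r (d p)); [lra | field_simplify; lra].
have py : edist p (seg p a t) = r.
  by rewrite seg_dist0 Rabs_right; [rewrite pa /t; field | ]; lra.
have ya : edist (seg p a t) a = d p - r.
  by rewrite seg_dist1 Rabs_right; [rewrite pa /t; field | ]; lra.
exists (seg p a t); split; first lra.
move=> q yq [fq _]; have := slice_alpha_range => alpha01.
apply: (slice_escape fp r0 _ _ fq).
- by have := edist_tri p (seg p a t) q; lra.
- have := dist_le n_pos AJ A_ne q ba; have := edist_tri q (seg p a t) a.
  by rewrite (edist_sym q (seg p a t)); lra.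
Qed.

End PorousSlices.

Definition box n := (pt n * pt n)%type.
Definition in_box n (b : box n) (p : pt n) := forall i, b.1 i <= p i <= b.2 i.
Definition proper_box n (b : box n) := forall i, b.1 i <= b.2 i.
Definition vol n (b : box n) := box_vol b.1 b.2.
Definition total_vol n (l : seq (box n)) := \big[Rplus/0]_(b <- l) vol b.

Definition box_cover n (l : seq (box n)) (S : rset n) :=
  (forall b, List.In b l -> proper_box b) /\
  (forall p, S p -> exists2 b, List.In b l & in_box b p).

Definition finitely_null n (S : rset n) :=
  forall eps, 0 < eps -> exists l, box_cover l S /\ total_vol l <= eps.

(* Membership in lists of boxes is the propositional List.In, boxes having no
   decidable equality. *)
Lemma In_cat (T : Type) (s1 s2 : seq T) x :
  List.In x (s1 ++ s2) <-> List.In x s1 \/ List.In x s2.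
Proof. by elim: s1 => [|y s1 IH] /=; [tauto | rewrite IH; tauto]. Qed.

Lemma In_mem (T : eqType) (s : seq T) x : List.In x s <-> x \in s.
Proof.
elim: s => [|y s IH] /=; first by split.
rewrite inE; split => [[-> | /IH xs] | /orP [/eqP -> | /IH xs]].
- by rewrite eqxx.
- by rewrite xs orbT.
- by left.
- by right.
Qed.

Lemma In_nth (T : Type) (x0 x : T) (s : seq T) :
  List.In x s -> exists2 i, (i < size s)%nat & nth x0 s i = x.
Proof.
elim: s => [|y s IH] //= [<- | /IH [i i_lt <-]]; first by exists 0%nat.
by exists i.+1.
Qed.

Lemma nth_In (T : Type) (x0 : T) (s : seq T) i :
  (i < size s)%nat -> List.In (nth x0 s i) s.
Proof.
elim: s i => [|y s IH] [|i] //= i_lt; first by left.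
by right; apply: IH.
Qed.

Lemma vol_ge0 n (b : box n) : proper_box b -> 0 <= vol b.
Proof.
move=> bp; apply: (big_ind (fun x => 0 <= x)) => [|u v|i _]; [lra | nra |].
by have := bp i; lra.
Qed.

Definition box0 n : box n := (fun _ => 0, fun _ => 0).

Lemma box0_vol n : (0 < n)%coq_nat -> vol (box0 n) = 0.
Proof.
move=> n_pos; rewrite /vol /box_vol (eq_bigr (fun _ => 0)) /=; last by move=> i _; ring.
by rewrite rprod_const; case: n n_pos => [|k] n_pos; [lia | simpl; ring].
Qed.

Lemma total_vol_cons n (b : box n) l : total_vol (b :: l) = vol b + total_vol l.
Proof. by rewrite /total_vol big_cons. Qed.

Lemma total_vol_ge0 n (l : seq (box n)) :
  (forall b, List.In b l -> proper_box b) -> 0 <= total_vol l.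
Proof.
elim: l => [|b l IH] l_proper; first by rewrite /total_vol big_nil; lra.
rewrite total_vol_cons; have := vol_ge0 (l_proper b (or_introl erefl)).
by have := IH (fun c cl => l_proper c (or_intror cl)); lra.
Qed.

Lemma cube_box_vol n (a : pt n) g : vol (a, fun i => a i + g) = g ^ n.
Proof.
by rewrite /vol /box_vol /= (eq_bigr (fun _ => g)) ?rprod_const // => i _; ring.
Qed.

Lemma total_vol_flatten n (I : Type) (r : seq I) (L : I -> seq (box n)) :
  total_vol (flatten (map L r)) = \big[Rplus/0]_(i <- r) total_vol (L i).
Proof. by rewrite /total_vol big_flatten big_map. Qed.

Lemma box_cover_flatten n (I : Type) (r : seq I) (L : I -> seq (box n)) (S : I -> rset n) :
  (forall i, List.In i r -> box_cover (L i) (S i)) ->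
  box_cover (flatten (map L r)) (fun p => exists2 i, List.In i r & S i p).
Proof.
elim: r => [|i r IH] cov; first by split => [b [] | p [? []]].
have [IH_proper IH_cover] := IH (fun j jr => cov j (or_intror jr)).
have [i_proper i_cover] := cov i (or_introl erefl).
split=> [b /In_cat [] | p [j [<- | jr] Sjp]].
- exact: i_proper.
- exact: IH_proper.
- by have [b bi pb] := i_cover p Sjp; exists b => //; apply/In_cat; left.
- have [b bi pb] := IH_cover p (ex_intro2 _ _ j jr Sjp).
  by exists b => //; apply/In_cat; right.
Qed.

Lemma subcube_cover n (S : rset n) (a : pt n) g q (P : {pred {ffun 'I_n -> 'I_q}}) V :
  (0 < q)%nat -> 0 <= g ->
  (forall p idx, S p -> cube a g p -> cube (subcorner a g q idx) (g / INR q) p -> P idx) ->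
  (forall idx, P idx -> exists l,
     box_cover l (fun p => S p /\ cube (subcorner a g q idx) (g / INR q) p) /\ total_vol l <= V) ->
  exists l, box_cover l (fun p => S p /\ cube a g p) /\ total_vol l <= INR #|P| * V.
Proof.
move=> q0 g0 only_P piece.
set Piece := fun idx p => S p /\ cube (subcorner a g q idx) (g / INR q) p.
have piece' idx : exists l, P idx -> box_cover l (Piece idx) /\ total_vol l <= V.
  by case: (boolP (P idx)) => [/piece [l hl] | _]; [exists l | exists [::]].
pose L idx := proj1_sig (constructive_indefinite_description _ (piece' idx)).
have L_spec idx : P idx -> box_cover (L idx) (Piece idx) /\ total_vol (L idx) <= V.
  exact: proj2_sig (constructive_indefinite_description _ (piece' idx)).
have enumP idx : List.In idx (enum P) <-> P idx by rewrite In_mem mem_enum.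
have [l_proper l_cover] : box_cover (flatten (map L (enum P)))
    (fun p => exists2 idx, List.In idx (enum P) & Piece idx p).
  by apply: box_cover_flatten => idx /enumP /L_spec [].
exists (flatten (map L (enum P))); split; first split => // p [Sp ap].
  have [idx p_idx] := cube_split q0 g0 ap.
  by apply: l_cover; exists idx; [apply/enumP; exact: only_P p_idx | split].
rewrite total_vol_flatten cardE; apply: rsum_seq_le_const => idx /enumP.
by case/L_spec.
Qed.

(* Subdivide a cube of side g <= 4 rho
   into q^n subcubes with q large: porosity at scale g / 4 provides a subcube
   missing S, so S meets at most q^n - 1 of them.  Iterating j times bounds the
   volume of a cover by theta^j g^n with theta = 1 - q^-n < 1. *)
Section PorousCover.
Variables (n : nat) (S : rset n) (rho alpha : R) (q : nat).
Hypothesis S_porous : porous S rho alpha.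
Hypothesis q_ge4 : 4 <= INR q.
Hypothesis q_fine : 4 * INR n < alpha * INR q.

Let q_pos : (0 < q)%nat.
Proof. by apply/ltP; apply: INR_lt; rewrite /=; lra. Qed.

Lemma porous_empty_subcube a g : 0 < g <= 4 * rho ->
  exists idx : {ffun 'I_n -> 'I_q}, forall p, cube (subcorner a g q idx) (g / INR q) p -> ~ S p.
Proof.
move=> [g0 g_rho]; set c : pt n := fun i => a i + g / 2.
have qR : 0 < INR q by lra.
have small_sub : g / INR q <= g / 4.
  by apply: Rmult_le_compat_l; [lra | apply: Rinv_le_contravar; lra].
have [[p [Sp pc]] | far] :=
  classic (exists p, S p /\ forall i, Rabs (p i - c i) <= g / 4).
- (* a hole of radius alpha g / 4 near p; the subcube containing its center
     has diameter < alpha g / 4 *)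
  have [y [py hole]] := S_porous Sp (r := g / 4) ltac:(split; lra).
  have y_in : cube a g y.
    move=> i; have := coord_le_edist p y i; have := pc i; rewrite /c.
    by rewrite /Rabs; case: Rcase_abs; case: Rcase_abs; lra.
  have [idx y_idx] := cube_split q_pos (Rlt_le _ _ g0) y_in.
  exists idx => p' p'_idx; apply: hole.
  apply: Rle_lt_trans (edist_le_coord_bound (s := g / INR q) _) _.
    by move=> i; rewrite Rabs_minus_sym; exact: cube_coord_close p'_idx y_idx i.
  rewrite (_ : INR n * (g / INR q) = (4 * INR n) * g / (4 * INR q)); last by field; lra.
  apply: (Rmult_lt_reg_r (4 * INR q)); first lra.
  by rewrite (_ : 4 * INR n * g / (4 * INR q) * (4 * INR q) = 4 * INR n * g); [nra | field; lra].
- (* no point of S near the center: take the subcube containing it *)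
  have c_in : cube a g c by move=> i; rewrite /c; lra.
  have [idx c_idx] := cube_split q_pos (Rlt_le _ _ g0) c_in.
  exists idx => p' p'_idx Sp'; apply: far; exists p'; split => // i.
  by have := cube_coord_close p'_idx c_idx i; lra.
Qed.

Definition porous_theta := 1 - / INR q ^ n.

Lemma porous_theta_range : 0 <= porous_theta < 1.
Proof.
have qn : 1 <= INR q ^ n by rewrite -(pow1 n); apply: pow_incr; lra.
have : 0 < / INR q ^ n by apply: Rinv_0_lt_compat; lra.
have : / INR q ^ n <= 1 by rewrite -Rinv_1; apply: Rinv_le_contravar; lra.
by rewrite /porous_theta; lra.
Qed.

Lemma porous_cube_cover j a g : 0 < g <= 4 * rho -> exists l,
  box_cover l (fun p => S p /\ cube a g p) /\ total_vol l <= porous_theta ^ j * g ^ n.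
Proof.
elim: j a g => [|j IH] a g g_range.
  exists [:: (a, fun i => a i + g)]; split; last by rewrite /total_vol big_seq1 cube_box_vol; lra.
  by split=> [b [<- // | []] i /= | p [_ ap]]; [lra | exists (a, fun i => a i + g); [left |]].
have [idx0 empty0] := porous_empty_subcube a g_range.
have qR : 0 < INR q by lra.
have sub_range : 0 < g / INR q <= 4 * rho.
  split; first by apply: Rdiv_lt_0_compat; lra.
  apply: Rle_trans (proj2 g_range); apply: (Rmult_le_reg_r (INR q)) => //.
  by rewrite (_ : g / INR q * INR q = g); [nra | field; lra].
have only_others p idx : S p -> cube a g p ->
    cube (subcorner a g q idx) (g / INR q) p -> idx != idx0.
  by move=> Sp _ p_idx; apply/eqP => e; subst idx; exact: empty0 p p_idx Sp.
have [l [l_cover l_vol]] := subcube_cover (P := predC1 idx0) q_pos (Rlt_le _ _ (proj1 g_range))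
  only_others (fun idx _ => IH (subcorner a g q idx) _ sub_range).
exists l; split => //; apply: Rle_trans l_vol _; right.
have qn : INR q ^ n <> 0 by apply: pow_nonzero; lra.
have -> : INR #|predC1 idx0| = INR q ^ n - 1.
  rewrite cardC1 card_ffun !card_ord -INR_expn.
  have : (0 < expn q n)%nat by rewrite expn_gt0 q_pos.
  by case: (expn q n) => [//|k _]; rewrite S_INR /=; ring.
by rewrite /porous_theta /Rdiv Rpow_mult_distr pow_inv /=; field.
Qed.
End PorousCover.

Lemma grid_fine G h : 0 < G -> 0 < h -> exists q : nat, (0 < q)%nat /\ 0 < G / INR q <= h.
Proof.
move=> G0 h0; have [q' q_big] := INR_unbounded (G / h).
have qR : 0 < INR q'.+1 by apply: lt_0_INR; lia.
exists q'.+1; split => //; split; first exact: Rdiv_lt_0_compat.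
apply: (Rmult_le_reg_r (INR q'.+1)) => //.
rewrite (_ : G / INR q'.+1 * INR q'.+1 = G); last by field; lra.
have : G / h < INR q'.+1 by rewrite S_INR; lra.
move=> G_lt; have := Rmult_lt_compat_l h _ _ h0 G_lt.
by rewrite (_ : h * (G / h) = G); [lra | field; lra].
Qed.

Lemma porous_finitely_null n (S : rset n) rho alpha C :
  0 < rho -> 0 < alpha -> porous S rho alpha -> (forall p, S p -> enorm p <= C) ->
  finitely_null S.
Proof.
move=> rho0 alpha0 S_porous SC eps e0.
have [q q_big] := INR_unbounded (4 * INR n / alpha + 4).
have n_ratio : 0 <= 4 * INR n / alpha by apply: Rle_mult_inv_pos; [have := pos_INR n |]; lra.
have q_ge4 : 4 <= INR q by lra.
have q_fine : 4 * INR n < alpha * INR q.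
  apply: (Rmult_lt_reg_r (/ alpha)); first exact: Rinv_0_lt_compat.
  by rewrite (_ : alpha * INR q * / alpha = INR q); [rewrite -/(Rdiv _ _); lra | field; lra].
have [th0 th1] := porous_theta_range n q_ge4.
set th := porous_theta n q in th0 th1.
(* S lies in a cube of side G, cut into q0^n cubes of side at most 4 rho *)
set a : pt n := fun _ => - (Rabs C + 1); set G := 2 * (Rabs C + 1).
have G0 : 0 < G by have := Rabs_pos C; rewrite /G; lra.
have [q0 [q0_pos side]] := grid_fine G0 (ltac:(lra) : 0 < 4 * rho).
have q0R : 0 < INR q0 by apply: lt_0_INR; apply/ltP.
have [j small] := geometric_small (G ^ n) (conj th0 th1) e0.
have [l [[l_proper l_cover] l_vol]] := subcube_cover (S := S) (a := a) (P := predT)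
  q0_pos (Rlt_le _ _ G0) (fun _ _ _ _ _ => erefl)
  (fun idx _ => porous_cube_cover S_porous q_ge4 q_fine j (subcorner a G q0 idx) side).
exists l; split.
  by split => // p Sp; apply: l_cover; split => //; exact: bounded_in_cube SC p Sp.
apply: Rle_trans l_vol _; apply: Rlt_le; apply: Rle_lt_trans small; right.
rewrite card_ffun !card_ord INR_expn /Rdiv Rpow_mult_distr pow_inv -/th.
by field; apply: pow_nonzero; lra.
Qed.

(* The partial sums of the volumes of a finite family, listed as a sequence
   padded with degenerate boxes, are bounded by its total volume. *)
Lemma partial_vol_le_total n (l : seq (box n)) M : (0 < n)%coq_nat ->
  (forall b, List.In b l -> proper_box b) ->
  sum_f_R0 (fun m => vol (nth (box0 n) l m)) M <= total_vol l.
Proof.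
move=> n_pos; elim: l M => [|b l IH] M l_proper.
  rewrite /total_vol big_nil (sum_eq _ (fun _ => 0)) ?sum_cte; first lra.
  by move=> i _; rewrite nth_nil box0_vol.
have b_proper := l_proper b (or_introl erefl).
have l_proper' c : List.In c l -> proper_box c by move=> cl; exact: l_proper c (or_intror cl).
rewrite total_vol_cons; have := total_vol_ge0 l_proper'.
case: M => [|M]; first by rewrite /=; lra.
by rewrite decomp_sum; [have := IH M l_proper'; rewrite /=; lra | lia].
Qed.

Lemma iota_sum (F : nat -> R) M : \big[Rplus/0]_(k <- iota 0 M.+1) F k = sum_f_R0 F M.
Proof.
elim: M => [|M IH]; first by rewrite /= big_seq1.
by rewrite -addn1 iotaD big_cat IH big_seq1.
Qed.

Lemma geometric_sum_le c M : 0 <= c -> sum_f_R0 (fun k => c * (/ 2) ^ k.+1) M <= c.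
Proof.
move=> c0; have closed_form : sum_f_R0 (fun k => c * (/ 2) ^ k.+1) M = c * (1 - (/ 2) ^ M.+1).
  by elim: M => [|M IH] /=; [field | rewrite IH /=; field].
rewrite closed_form; have : 0 <= (/ 2) ^ M.+1 by apply: pow_le; lra.
nra.
Qed.

(* A Lebesgue null set together with countably many finitely null sets is a
   Lebesgue null set: concatenate, block after block, a cover of the k-th
   finitely null set of volume eps / 2^(k+2) with the k-th box of an
   (eps / 2)-cover of the null set. *)
Lemma union_null n (N : rset n) (S : nat -> rset n) : (0 < n)%coq_nat ->
  lebesgue_null N -> (forall k, finitely_null (S k)) ->
  lebesgue_null (fun p => N p \/ exists k, S k p).
Proof.
move=> n_pos N_null S_null eps e0.
have [a [b [ab [N_cover N_vol]]]] := N_null (eps / 2) ltac:(lra).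
have L_ex k : exists l, box_cover l (S k) /\ total_vol l <= eps / 2 * (/ 2) ^ k.+1.
  by apply: S_null; apply: Rmult_lt_0_compat; [lra | apply: pow_lt; lra].
pose L k := proj1_sig (constructive_indefinite_description _ (L_ex k)).
have L_spec k : box_cover (L k) (S k) /\ total_vol (L k) <= eps / 2 * (/ 2) ^ k.+1.
  exact: proj2_sig (constructive_indefinite_description _ (L_ex k)).
pose block k := (a k, b k) :: L k.
pose blocks K := flatten (map block (iota 0 K)).
have block_cover k : box_cover (block k) (fun p => in_box (a k, b k) p \/ S k p).
  have [L_proper L_cover] := proj1 (L_spec k).
  split=> [c [<- | cL] | p [pk | Skp]]; [exact: ab | exact: L_proper | by exists (a k, b k); [left |] |].
  by have [c cL pc] := L_cover p Skp; exists c; [right |].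
have blocks_cover K := box_cover_flatten (r := iota 0 K) (fun k _ => block_cover k).
have blocks_grow K d : blocks (K + d)%nat = blocks K ++ flatten (map block (iota K d)).
  by rewrite /blocks iotaD map_cat flatten_cat.
have blocks_size K : (K <= size (blocks K))%nat.
  by elim: K => [//|K IH]; rewrite -addn1 blocks_grow size_cat /=; lia.
(* the m-th box of the sequence is the m-th box of any long enough prefix *)
pose s m := nth (box0 n) (blocks m.+1) m.
have s_nth K i : (i < size (blocks K))%nat -> s i = nth (box0 n) (blocks K) i.
  move=> i_lt; rewrite /s; case: (leqP K i.+1) => [K_le | K_gt].
  - by rewrite -(subnKC K_le) (blocks_grow K (i.+1 - K)%nat) nth_cat i_lt.
  - have i_lt' : (i < size (blocks i.+1))%nat by have := blocks_size i.+1; lia.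
    by rewrite -(subnKC (ltnW K_gt)) (blocks_grow i.+1 (K - i.+1)%nat) [X in _ = X]nth_cat i_lt'.
exists (fun m => (s m).1), (fun m => (s m).2); split; [|split].
- move=> m i; rewrite /s; case: (ltnP m (size (blocks m.+1))) => [m_lt | m_ge].
    exact: (proj1 (blocks_cover m.+1) _ (nth_In _ m_lt)).
  by rewrite nth_default //= ; lra.
- move=> p p_in.
  have [k pk] : exists k, in_box (a k, b k) p \/ S k p.
    case: p_in => [Np | [k Skp]]; last by exists k; right.
    by have [k pk] := N_cover p Np; exists k; left.
  have k_in : List.In k (iota 0 k.+1) by apply/In_mem; rewrite mem_iota; lia.
  have [c c_in pc] := proj2 (blocks_cover k.+1) p (ex_intro2 _ _ k k_in pk).
  have [i i_lt ci] := In_nth (box0 n) c_in.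
  by exists i; rewrite (s_nth _ _ i_lt) ci.
- move=> M.
  have -> : sum_f_R0 (fun m => box_vol (s m).1 (s m).2) M =
      sum_f_R0 (fun m => vol (nth (box0 n) (blocks M.+1) m)) M.
    by apply: sum_eq => m m_le; rewrite /vol (s_nth M.+1) //; have := blocks_size M.+1; lia.
  apply: Rle_trans (partial_vol_le_total _ n_pos (proj1 (blocks_cover M.+1))) _.
  rewrite total_vol_flatten iota_sum.
  rewrite (sum_eq _ (fun k => box_vol (a k) (b k) + total_vol (L k))); last first.
    by move=> k _; rewrite total_vol_cons.
  rewrite sum_plus; have := N_vol M.
  have : sum_f_R0 (fun k => total_vol (L k)) M <= sum_f_R0 (fun k => eps / 2 * (/ 2) ^ k.+1) M.
    by apply: sum_Rle => k _; exact: (proj2 (L_spec k)).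
  by have := geometric_sum_le M (ltac:(lra) : 0 <= eps / 2); lra.
Qed.

Lemma null_subset n (S T : rset n) :
  (forall p, S p -> T p) -> lebesgue_null T -> lebesgue_null S.
Proof.
move=> ST T_null eps e0; have [a [b [ab [T_cov T_vol]]]] := T_null eps e0.
by exists a, b; split => //; split => // p Sp; exact: T_cov (ST p Sp).
Qed.

Lemma Omega_null_gt_half n (A B : rset n) x : (0 < n)%coq_nat ->
  in_Jn A -> nonempty A -> in_Jn B -> nonempty B -> 1 / 2 < x ->
  lebesgue_null (Omega A B x).
Proof.
move=> n_pos AJ A_ne BJ B_ne x_gt.
apply: (null_subset (T := fun p => boundary A p \/ exists k, slice A B x k p)).
  exact: Omega_cover n_pos AJ A_ne.
apply: union_null => // [|k]; first exact: proj2 (proj2 AJ).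
have [C OmegaC] := Omega_bounded x n_pos AJ A_ne BJ B_ne.
apply: (porous_finitely_null (C := C) _ (proj1 (slice_alpha_range x_gt))
  (slice_porous n_pos AJ A_ne BJ B_ne x_gt (k := k))).
- by apply: Rinv_0_lt_compat; have := pos_INR k; lra.
- by move=> p [fp _]; exact: OmegaC.
Qed.

Lemma Omega_swap n (A B : rset n) x p : Omega A B x p -> Omega B A (1 - x) p.
Proof. by rewrite /Omega /fABx; lra. Qed.

Lemma Omega_null n (A B : rset n) x : (0 < n)%coq_nat ->
  in_Jn A -> nonempty A -> in_Jn B -> nonempty B -> x <> 1 / 2 ->
  lebesgue_null (Omega A B x).
Proof.
move=> n_pos AJ A_ne BJ B_ne x_ne.
have [x_gt|x_le] := Rlt_le_dec (1 / 2) x; first exact: Omega_null_gt_half.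
apply: null_subset (Omega_swap (A := A) (B := B) (x := x)) _.
by apply: Omega_null_gt_half => //; lra.
Qed.

Lemma dist_avg_jordan n (A B : rset n) x : (0 < n)%coq_nat ->
  in_Jn A -> nonempty A -> in_Jn B -> nonempty B ->
  lebesgue_null (Omega A B x) -> jordan_measurable (dist_avg A B x).
Proof.
move=> n_pos AJ A_ne BJ B_ne Omega_null; split.
  exact: dist_avg_bounded x n_pos AJ A_ne BJ B_ne.
exact: null_subset (dist_avg_boundary n_pos AJ A_ne BJ B_ne (x := x)) Omega_null.
Qed.

Theorem mainTheorem6 (n : nat) (hn : (0 < n)%coq_nat) (A B : rset n) :
  in_Jn A -> in_Jn B -> nonempty A -> nonempty B ->
  (zero_measure_condition A B ->
     forall x : R, jordan_measurable (dist_avg A B x)) /\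
  (~ zero_measure_condition A B ->
     forall x : R, x <> 1/2 -> jordan_measurable (dist_avg A B x)).
Proof.
move=> AJ BJ A_ne B_ne.
have Omega_null_off_half x : x <> 1 / 2 -> lebesgue_null (Omega A B x).
  exact: Omega_null hn AJ A_ne BJ B_ne.
split=> [zero_measure x | _ x x_ne]; apply: dist_avg_jordan hn AJ A_ne BJ B_ne _.
- by have [->|x_ne] := Req_dec x (1 / 2); [exact: zero_measure | exact: Omega_null_off_half].
- exact: Omega_null_off_half.
Qed.
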